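(* Let $\Gamma$ be a group acting quasi-transitively on a tree $T$ with infinitely many ends, such that the action stabilizes an end of $T$. Then the action of $\Gamma$ on $T$ is not free.
   Context: An action on $T$ is quasi-transitive if $V(T)$ has finitely many orbits. Ends of $T$ are equivalence classes of rays (infinite one-way paths), two rays being equivalent if there are infinitely many disjoint paths between them; $\Gamma$ stabilizes an end if every element maps rays of that end to rays of that end. The action is free if the only element of $\Gamma$ fixing some vertex of $T$ is the identity. *)

From Stdlib Require Import List.
Set Implicit Arguments.
Import ListNotations.

Section Defs.
Variable V : Type.
Variable adj : V -> V -> Prop.

Fixpoint walk (p : list V) : Prop :=
  match p with
  | x :: ((y :: _) as q) => adj x y /\ walk q
  | _ => True
  end.

Definition is_path (p : list V) : Prop := p <> [] /\ NoDup p /\ walk p.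

Definition connected_graph : Prop :=
  forall x y : V, exists p, is_path p /\ hd_error p = Some x /\ last p x = y.

Definition has_cycle : Prop :=
  exists p : list V, is_path p /\ 3 <= length p /\
    exists x0, hd_error p = Some x0 /\ adj (last p x0) x0.

Definition is_tree : Prop :=
  (forall x y, adj x y -> adj y x) /\ (forall x, ~ adj x x) /\
  connected_graph /\ ~ has_cycle.

Definition ray (r : nat -> V) : Prop :=
  (forall m n, r m = r n -> m = n) /\ (forall n, adj (r n) (r (S n))).

Definition disjoint_lists (p q : list V) : Prop := forall x, In x p -> ~ In x q.

Definition end_equiv (r1 r2 : nat -> V) : Prop :=
  exists P : nat -> list V,
    (forall i, is_path (P i) /\
       exists x, hd_error (P i) = Some x /\
       (exists m, r1 m = x) /\ (exists n, r2 n = last (P i) x)) /\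
    (forall i j, i <> j -> disjoint_lists (P i) (P j)).

Definition infinitely_many_ends : Prop :=
  exists R : nat -> nat -> V,
    (forall i, ray (R i)) /\
    (forall i j, i <> j -> ~ end_equiv (R i) (R j)).
End Defs.
Arguments walk {V}.
Arguments is_path {V}.
Arguments ray {V}.
Arguments end_equiv {V}.
Arguments is_tree {V}.
Arguments infinitely_many_ends {V}.
Arguments connected_graph {V}.
Arguments has_cycle {V}.

Definition is_group (G : Type) (mul : G -> G -> G) (one : G) (inv : G -> G) : Prop :=
  (forall a b c, mul a (mul b c) = mul (mul a b) c) /\
  (forall a, mul one a = a) /\ (forall a, mul a one = a) /\
  (forall a, mul (inv a) a = one) /\ (forall a, mul a (inv a) = one).

Definition is_graph_action (G V : Type) (mul : G -> G -> G) (one : G)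
    (adj : V -> V -> Prop) (act : G -> V -> V) : Prop :=
  (forall v, act one v = v) /\
  (forall g h v, act (mul g h) v = act g (act h v)) /\
  (forall g x y, adj x y <-> adj (act g x) (act g y)).

Definition quasi_transitive (G V : Type) (act : G -> V -> V) : Prop :=
  exists s : list V, forall v, exists u g, In u s /\ act g u = v.

Definition stabilizes_end (G V : Type) (adj : V -> V -> Prop)
    (act : G -> V -> V) (r : nat -> V) : Prop :=
  forall g r', ray adj r' -> end_equiv adj r' r ->
    end_equiv adj (fun n => act g (r' n)) r.

Definition stabilizes_some_end (G V : Type) (adj : V -> V -> Prop)
    (act : G -> V -> V) : Prop :=
  exists r, ray adj r /\ stabilizes_end adj act r.

Definition free_action (G V : Type) (one : G) (act : G -> V -> V) : Prop :=
  forall g v, act g v = v -> g = one.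

(* Fix a ray [r] in the stabilised end. From every vertex there is a unique ray that eventually
   runs along [r], and comparing offsets gives a Busemann function [level] on the tree. A group
   element maps [r] to a ray sharing a tail with [r], so it shifts all levels by one constant;
   if the action is free, an element preserving one level fixes a vertex of [r] and is trivial.
   Hence a level meets each orbit at most once and has at most as many vertices as there are
   orbits. On the other hand, of infinitely many pairwise inequivalent rays at most one lies in
   the stabilised end; all others eventually descend level by level and, far enough down, are
   pairwise disjoint, so some level has more vertices than there are orbits. *)

From Stdlib Require Import List Lia ZArith Classical ClassicalEpsilon Relations.
Import ListNotations.

Section Lists.
Context {A : Type}.

Lemma last_cons (x : A) l d : last (x :: l) d = last l x.
Proof.
  revert x d; induction l as [|y l IH]; intros x d; [reflexivity|].
  change (last (y :: l) d = last (y :: l) x). now rewrite !IH.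
Qed.

Lemma last_in_cons (x : A) l : In (last l x) (x :: l).
Proof.
  revert x; induction l as [|y l IH]; intros x; [now left|].
  rewrite last_cons. right. apply IH.
Qed.

Lemma last_app_cons (l1 l2 : list A) x d : last (l1 ++ x :: l2) d = last l2 x.
Proof.
  revert d; induction l1 as [|y l1 IH]; intros d; simpl app; rewrite last_cons;
    [reflexivity|apply IH].
Qed.

Lemma disjoint_family_avoids (P : nat -> list A) :
  (forall i j, i <> j -> disjoint_lists (P i) (P j)) ->
  forall X : list A, exists i, forall x, In x (P i) -> ~ In x X.
Proof.
  intros Hdisj X. apply NNPP; intros Hnone.
  assert (Hmeet : forall i, exists x, In x (P i) /\ In x X).
  { intros i. apply NNPP; intros Hi. apply Hnone. exists i. intros x Hx HX. eauto. }
  destruct (choice _ Hmeet) as [f Hf].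
  assert (Hlen : length (map f (seq 0 (S (length X)))) <= length X).
  { apply NoDup_incl_length.
    - apply NoDup_map_NoDup_ForallPairs; [|apply seq_NoDup].
      intros i j _ _ E. destruct (Nat.eq_dec i j) as [|Hij]; [assumption|].
      exfalso. apply (Hdisj i j Hij (f i)); [|rewrite E]; apply Hf.
    - intros x Hx. apply in_map_iff in Hx as [i [<- _]]. apply Hf. }
  rewrite length_map, length_seq in Hlen. lia.
Qed.

Lemma injective_eventually_avoids (f g : nat -> A) :
  (forall m n, f m = f n -> m = n) ->
  forall N, exists M, forall a b, M <= a -> b < N -> f a <> g b.
Proof.
  intros Hf; induction N as [|N [M IH]]; [exists 0; intros; lia|].
  destruct (classic (exists a0, f a0 = g N)) as [[a0 Ha0]|Hno].
  - exists (max M (S a0)). intros a b Ha Hb E.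
    destruct (Nat.eq_dec b N) as [->|Hne].
    + rewrite <- Ha0 in E. apply Hf in E. lia.
    + apply (IH a b); [lia|lia|exact E].
  - exists M. intros a b Ha Hb E.
    destruct (Nat.eq_dec b N) as [->|Hne]; [eauto|].
    apply (IH a b); [lia|lia|exact E].
Qed.

End Lists.

Lemma eventually_below_all (P : nat -> Z -> Prop) k :
  (forall j, j <= k -> exists L0, forall L, (L <= L0)%Z -> P j L) ->
  exists L0, forall j, j <= k -> forall L, (L <= L0)%Z -> P j L.
Proof.
  induction k as [|k IH]; intros H.
  - destruct (H 0 (le_n 0)) as [L0 HL0]. exists L0.
    intros j Hj. replace j with 0 by lia. exact HL0.
  - destruct IH as [L1 HL1]; [intros j Hj; apply H; lia|].
    destruct (H (S k) (le_n _)) as [L2 HL2]. exists (Z.min L1 L2).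
    intros j Hj L HL. destruct (Nat.eq_dec j (S k)) as [->|Hne].
    + apply HL2; lia.
    + apply HL1; lia.
Qed.

Section Walks.
Context {V : Type} (adj : V -> V -> Prop).

Lemma walk_app_inv_r l1 l2 : walk adj (l1 ++ l2) -> walk adj l2.
Proof.
  induction l1 as [|x l1 IH]; [trivial|].
  intros Hw. apply IH. destruct l1 as [|y l1]; [destruct l2|]; simpl in *; tauto.
Qed.

Lemma walk_exits (P : V -> Prop) x l :
  walk adj (x :: l) -> P x -> ~ P (last l x) ->
  exists u v, In u (x :: l) /\ In v (x :: l) /\ P u /\ ~ P v /\ adj u v.
Proof.
  revert x; induction l as [|y l IH]; intros x Hw Px HPl; [contradiction|].
  destruct Hw as [Hxy Hw]. rewrite last_cons in HPl.
  destruct (classic (P y)) as [Py|nPy].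
  - destruct (IH y Hw Py HPl) as [u [v [Hu [Hv H]]]].
    exists u, v. split; [right; exact Hu|split; [right; exact Hv|exact H]].
  - exists x, y. split; [now left|split; [right; now left|tauto]].
Qed.

Lemma singleton_path x : is_path adj [x].
Proof. split; [discriminate|split; [constructor; [intros []|constructor]|exact I]]. Qed.

Lemma is_path_cons x y l :
  ~ In x (y :: l) -> adj x y -> is_path adj (y :: l) -> is_path adj (x :: y :: l).
Proof.
  intros Hx Hxy [_ [Hnd Hw]].
  split; [discriminate|split; [constructor; assumption|split; assumption]].
Qed.

Lemma is_path_tail x y l : is_path adj (x :: y :: l) -> is_path adj (y :: l).
Proof.
  intros [_ [Hnd [_ Hw]]]. inversion Hnd. split; [discriminate|split; assumption].
Qed.

Lemma path_ends_distinct x l : is_path adj (x :: l) -> last l x = x -> l = [].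
Proof.
  destruct l as [|y l]; [reflexivity|]. intros [_ [Hnd _]] Hl. exfalso.
  inversion Hnd as [|? ? Hx _]. rewrite last_cons in Hl.
  apply Hx. rewrite <- Hl. apply last_in_cons.
Qed.

Definition connected_within (S : V -> Prop) : V -> V -> Prop :=
  clos_refl_sym_trans V (fun u v => S u /\ S v /\ adj u v).

Lemma connected_within_mono (S S' : V -> Prop) x y :
  (forall v, S v -> S' v) -> connected_within S x y -> connected_within S' x y.
Proof.
  intros HS H; induction H as [u v [? [? ?]]| |u v _ IH|u v w _ IH1 _ IH2].
  - apply rst_step. auto.
  - apply rst_refl.
  - now apply rst_sym.
  - now apply rst_trans with v.
Qed.

Lemma walk_connected_within x l :
  walk adj (x :: l) -> connected_within (fun v => In v (x :: l)) x (last l x).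
Proof.
  revert x; induction l as [|y l IH]; intros x Hw; [apply rst_refl|].
  destruct Hw as [Hxy Hw]. rewrite last_cons. apply rst_trans with y.
  - apply rst_step. split; [now left|split; [right; now left|exact Hxy]].
  - apply (connected_within_mono (fun v => In v (y :: l))); [intros v Hv; right; exact Hv|].
    apply IH, Hw.
Qed.

Lemma walk_to_path x l : walk adj (x :: l) ->
  exists p, is_path adj (x :: p) /\ last p x = last l x /\ incl (x :: p) (x :: l).
Proof.
  revert x; induction l as [|y l IH]; intros x Hw.
  { exists []. split; [apply singleton_path|split; [reflexivity|apply incl_refl]]. }
  destruct Hw as [Hxy Hw]. rewrite last_cons.
  destruct (IH y Hw) as [p [[_ [Hnd Hpw]] [Hl Hincl]]].
  destruct (classic (In x (y :: p))) as [Hx|Hx].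
  - destruct (in_split _ _ Hx) as [p1 [p2 E]]. exists p2. rewrite E in Hnd, Hpw, Hincl.
    split; [split; [discriminate|split]|split].
    + eapply NoDup_app_remove_l; exact Hnd.
    + eapply walk_app_inv_r; exact Hpw.
    + rewrite <- Hl, <- (last_app_cons p1 p2 x y), <- E. apply last_cons.
    + intros v [<-|Hv]; [now left|right; apply Hincl, in_or_app; right; right; exact Hv].
  - exists (y :: p). split; [apply is_path_cons; [exact Hx|exact Hxy|]|split].
    + split; [discriminate|split; assumption].
    + rewrite last_cons. exact Hl.
    + intros v [<-|Hv]; [now left|right; apply Hincl, Hv].
Qed.

Hypothesis adj_sym : forall x y, adj x y -> adj y x.

Lemma connected_within_walk (S : V -> Prop) x y : S x -> connected_within S x y ->
  exists l, walk adj (x :: l) /\ last l x = y /\ forall v, In v (x :: l) -> S v.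
Proof.
  intros Sx H. apply clos_rst_rst1n in H. revert Sx.
  induction H as [x|x y z Hxy _ IH]; intros Sx.
  - exists []. split; [exact I|split; [reflexivity|intros v [<-|[]]; exact Sx]].
  - assert (Hstep : S y /\ adj x y) by (destruct Hxy as [[_ [? ?]]|[? [_ ?]]]; auto).
    destruct Hstep as [Sy Hadj]. destruct (IH Sy) as [l [Hw [Hl HS]]].
    exists (y :: l). split; [split; assumption|split].
    + rewrite last_cons; exact Hl.
    + intros v [<-|Hv]; [exact Sx|apply HS, Hv].
Qed.

Lemma connected_within_path (S : V -> Prop) x y : S x -> connected_within S x y ->
  exists p, is_path adj (x :: p) /\ last p x = y /\ forall v, In v (x :: p) -> S v.
Proof.
  intros Sx H. destruct (connected_within_walk S x y Sx H) as [l [Hw [Hl HS]]].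
  destruct (walk_to_path x l Hw) as [p [Hp [Hpl Hincl]]].
  exists p. split; [exact Hp|split; [congruence|intros v Hv; apply HS, Hincl, Hv]].
Qed.

Hypothesis acyclic : ~ has_cycle adj.

Lemma acyclic_closing_edge x y l : is_path adj (x :: y :: l) -> adj (last l y) x -> l = [].
Proof.
  intros Hp Hclose. destruct l as [|z l]; [reflexivity|]. exfalso. apply acyclic.
  exists (x :: y :: z :: l). split; [exact Hp|split; [simpl; lia|]].
  exists x. split; [reflexivity|]. rewrite 2!last_cons. exact Hclose.
Qed.

Lemma path_unique x p q :
  is_path adj (x :: p) -> is_path adj (x :: q) -> last p x = last q x -> p = q.
Proof.
  revert x q; induction p as [|y p IH]; intros x q Hp Hq Hl.
  { symmetry. apply (path_ends_distinct x q Hq). symmetry. exact Hl. }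
  destruct q as [|z q].
  { apply (path_ends_distinct x (y :: p) Hp) in Hl. discriminate. }
  rewrite !last_cons in Hl.
  destruct (classic (y = z)) as [<-|Hyz].
  { f_equal. apply (IH y); [eapply is_path_tail; eauto..|exact Hl]. }
  (* Otherwise [p] and [q] join [y] to [z] avoiding [x], closing a cycle through [x]. *)
  exfalso.
  set (S := fun v => In v (y :: p) \/ In v (z :: q)).
  assert (Hjoin : connected_within S y z).
  { apply rst_trans with (last p y).
    - apply (connected_within_mono (fun v => In v (y :: p))); [intros v; unfold S; tauto|].
      apply walk_connected_within, (is_path_tail x), Hp.
    - apply rst_sym. rewrite Hl.
      apply (connected_within_mono (fun v => In v (z :: q))); [intros v; unfold S; tauto|].
      apply walk_connected_within, (is_path_tail x), Hq. }
  destruct (connected_within_path S y z (or_introl (or_introl eq_refl)) Hjoin)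
    as [pi [Hpi [Hlast HS]]].
  assert (Hpi_x : is_path adj (x :: y :: pi)).
  { apply is_path_cons; [|apply Hp|exact Hpi].
    intros Hx. destruct (HS x Hx) as [Hx'|Hx'];
      [destruct Hp as [_ [Hnd _]]|destruct Hq as [_ [Hnd _]]]; inversion Hnd; contradiction. }
  assert (Hpi_nil : pi = []).
  { apply (acyclic_closing_edge x y pi Hpi_x). rewrite Hlast. apply adj_sym, Hq. }
  subst pi. apply Hyz, Hlast.
Qed.

Lemma path_within_connected (S : V -> Prop) x p :
  is_path adj (x :: p) -> S x -> connected_within S x (last p x) -> forall v, In v (x :: p) -> S v.
Proof.
  intros Hp Sx H. destruct (connected_within_path S x _ Sx H) as [pi [Hpi [Hl HS]]].
  rewrite <- (path_unique x pi p Hpi Hp Hl). exact HS.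
Qed.

End Walks.

Section Rays.
Context {V : Type} (adj : V -> V -> Prop).

Definition segment (f : nat -> V) a n := map f (seq a (S n)).

Lemma In_segment (f : nat -> V) a n v :
  In v (segment f a n) <-> exists i, a <= i <= a + n /\ v = f i.
Proof.
  unfold segment. rewrite in_map_iff. split.
  - intros [i [<- Hi]]. apply in_seq in Hi. exists i. split; [lia|reflexivity].
  - intros [i [Hi ->]]. exists i. split; [reflexivity|apply in_seq; lia].
Qed.

Lemma segment_end (f : nat -> V) a n : last (map f (seq (S a) n)) (f a) = f (a + n).
Proof.
  rewrite <- (last_cons (f a) _ (f a)). unfold segment.
  change (f a :: map f (seq (S a) n)) with (map f (seq a (S n))).
  rewrite seq_S, map_app. apply last_last.
Qed.

Lemma segment_walk f a n : (forall i, adj (f i) (f (S i))) -> walk adj (segment f a n).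
Proof.
  intros Hf; revert a; induction n as [|n IH]; intros a; [exact I|].
  split; [apply Hf|apply IH].
Qed.

Lemma segment_path f a n : ray adj f -> is_path adj (segment f a n).
Proof.
  intros [Hinj Hf]. split; [discriminate|split; [|apply segment_walk, Hf]].
  apply NoDup_map_NoDup_ForallPairs; [intros i j _ _; apply Hinj|apply seq_NoDup].
Qed.

Lemma segment_connected_within f a m : (forall i, adj (f i) (f (S i))) -> a <= m ->
  connected_within adj (fun v => exists i, a <= i <= m /\ v = f i) (f a) (f m).
Proof.
  intros Hf Ham. apply (connected_within_mono adj (fun v => In v (segment f a (m - a)))).
  - intros v Hv. apply In_segment in Hv as [i [Hi ->]]. exists i. split; [lia|reflexivity].
  - pose proof (walk_connected_within adj (f a) (map f (seq (S a) (m - a)))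
      (segment_walk f a (m - a) Hf)) as H.
    rewrite segment_end in H. replace (a + (m - a)) with m in H by lia. exact H.
Qed.

Lemma end_equiv_of_meets_cofinally r1 r2 : ray adj r1 ->
  (forall M, exists a b, M <= a /\ r1 a = r2 b) -> end_equiv adj r1 r2.
Proof.
  intros H1 Hmeet.
  assert (Hmeet' : forall M, exists a, M <= a /\ exists b, r2 b = r1 a).
  { intros M. destruct (Hmeet M) as [a [b [Ha E]]]. eauto. }
  destruct (choice _ Hmeet') as [f Hf].
  set (g i := Nat.iter (S i) (fun a => f (S a)) 0).
  assert (Hstep : forall i, g i < g (S i)) by (intros i; exact (proj1 (Hf (S (g i))))).
  assert (Hg : forall i j, i < j -> g i < g j).
  { intros i j Hij. induction Hij as [|j _ IH]; [apply Hstep|specialize (Hstep j); lia]. }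
  exists (fun i => [r1 (g i)]). split.
  - intros i. split; [apply singleton_path|]. exists (r1 (g i)).
    split; [reflexivity|split; [exists (g i); reflexivity|exact (proj2 (Hf _))]].
  - intros i j Hij v [<-|[]] [E|[]]. apply (proj1 H1) in E.
    destruct (Nat.lt_total i j) as [H|[H|H]]; [apply Hg in H|contradiction|apply Hg in H]; lia.
Qed.

Lemma not_end_equiv_eventually_disjoint r1 r2 : ray adj r1 -> ~ end_equiv adj r1 r2 ->
  exists M, forall a b, M <= a -> r1 a <> r2 b.
Proof.
  intros H1 Hne. apply NNPP; intros Hc. apply Hne, end_equiv_of_meets_cofinally; [exact H1|].
  intros M. apply NNPP; intros HM. apply Hc. exists M. intros a b Ha E. apply HM. eauto.
Qed.

Hypothesis adj_sym : forall x y, adj x y -> adj y x.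
Hypothesis acyclic : ~ has_cycle adj.

Lemma segments_agree f g a b m n : ray adj f -> ray adj g ->
  f a = g b -> f (a + m) = g (b + n) -> m = n /\ forall i, i <= m -> f (a + i) = g (b + i).
Proof.
  intros Hf Hg E0 E1.
  assert (E : segment f a m = segment g b n).
  { change (f a :: map f (seq (S a) m) = g b :: map g (seq (S b) n)). rewrite E0. f_equal.
    apply (path_unique adj adj_sym acyclic (g b)).
    - rewrite <- E0. apply segment_path, Hf.
    - apply segment_path, Hg.
    - rewrite segment_end, <- E0, segment_end. exact E1. }
  assert (Hmn : m = n).
  { apply (f_equal (@length V)) in E. unfold segment in E.
    rewrite !length_map, !length_seq in E. lia. }
  subst n. split; [reflexivity|]. intros i Hi.
  apply (f_equal (fun l => nth_error l i)) in E. unfold segment in E.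
  rewrite !nth_error_map, !nth_error_seq in E.
  replace (Nat.ltb i (S m)) with true in E by (symmetry; apply Nat.ltb_lt; lia).
  injection E as E. exact E.
Qed.

Lemma path_within_bridge r1 r2 a b m n P pi :
  ray adj r1 -> ray adj r2 -> a <= m -> b <= n ->
  is_path adj (r1 m :: P) -> last P (r1 m) = r2 n ->
  is_path adj (r1 a :: pi) -> last pi (r1 a) = r2 b ->
  forall v, In v (r1 a :: pi) ->
    (exists i, a <= i <= m /\ v = r1 i) \/ In v (r1 m :: P) \/
    (exists j, b <= j <= n /\ v = r2 j).
Proof.
  intros H1 H2 Ham Hbn HP HPl Hpi Hpil.
  apply (path_within_connected adj adj_sym acyclic);
    [exact Hpi|left; exists a; split; [lia|reflexivity]|].
  rewrite Hpil. apply rst_trans with (r1 m); [|apply rst_trans with (r2 n)].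
  - apply (connected_within_mono adj (fun v => exists i, a <= i <= m /\ v = r1 i));
      [intros v Hv; tauto|].
    apply segment_connected_within; [apply H1|exact Ham].
  - rewrite <- HPl.
    apply (connected_within_mono adj (fun v => In v (r1 m :: P))); [intros v Hv; tauto|].
    apply walk_connected_within, HP.
  - apply rst_sym, (connected_within_mono adj (fun v => exists j, b <= j <= n /\ v = r2 j));
      [intros v Hv; tauto|].
    apply segment_connected_within; [apply H2|exact Hbn].
Qed.

Lemma path_in_ray_tails r1 r2 a b pi :
  ray adj r1 -> ray adj r2 -> end_equiv adj r1 r2 ->
  is_path adj (r1 a :: pi) -> last pi (r1 a) = r2 b ->
  forall v, In v (r1 a :: pi) -> (exists i, a <= i /\ v = r1 i) \/ (exists j, b <= j /\ v = r2 j).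
Proof.
  (* A connecting path of the end that avoids [pi] and the initial segments of both rays,
     together with the ray tails, gives a second route between the ends of [pi]. *)
  intros H1 H2 [P [HP Hdisj]] Hpi Hpil v Hv.
  destruct (disjoint_family_avoids P Hdisj ((r1 a :: pi) ++ segment r1 0 a ++ segment r2 0 b))
    as [k Hk].
  destruct (HP k) as [HPk [x [Hx [[m Hm] [n Hn]]]]].
  revert HPk Hx Hn Hk. generalize (P k) as Pk.
  intros [|y Q] HPk Hx Hn Hk; [destruct HPk; congruence|].
  injection Hx as ->. subst x. rewrite last_cons in Hn.
  assert (Ham : a <= m).
  { destruct (Nat.le_gt_cases a m) as [|Hma]; [assumption|].
    exfalso. apply (Hk (r1 m) (or_introl eq_refl)).
    apply in_or_app; right; apply in_or_app; left.
    apply In_segment. exists m. split; [lia|reflexivity]. }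
  assert (Hbn : b <= n).
  { destruct (Nat.le_gt_cases b n) as [|Hnb]; [assumption|].
    exfalso. apply (Hk (r2 n)); [rewrite Hn; apply last_in_cons|].
    apply in_or_app; right; apply in_or_app; right.
    apply In_segment. exists n. split; [lia|reflexivity]. }
  destruct (path_within_bridge r1 r2 a b m n Q pi H1 H2 Ham Hbn HPk (eq_sym Hn) Hpi Hpil v Hv)
    as [[i [Hi ->]]|[HvQ|[j [Hj ->]]]].
  - left. exists i. split; [lia|reflexivity].
  - exfalso. apply (Hk v HvQ). apply in_or_app. left. exact Hv.
  - right. exists j. split; [lia|reflexivity].
Qed.

Hypothesis connected : connected_graph adj.

Lemma end_equiv_meets_cofinally r1 r2 : ray adj r1 -> ray adj r2 -> end_equiv adj r1 r2 ->
  forall M, exists a b, M <= a /\ r1 a = r2 b.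
Proof.
  intros H1 H2 He M. apply NNPP; intros Hnone.
  assert (Hdis : forall a b, M <= a -> r1 a <> r2 b) by (intros a b Ha E; apply Hnone; eauto).
  destruct (connected (r1 M) (r2 0)) as [p [Hp [Hhd Hlast]]].
  destruct p as [|x p]; [destruct Hp; congruence|]. injection Hhd as ->.
  rewrite last_cons in Hlast.
  (* If the tails were disjoint, a path from [r1 M] to [r2 0] would leave the tail of [r1] by
     an edge [r1 i -- r2 j], and then the path [r1 (S i); r1 i; r2 j] would have to stay in the
     tails. *)
  destruct (walk_exits adj (fun v => exists i, M <= i /\ v = r1 i) (r1 M) p (proj2 (proj2 Hp)))
    as [u [v [_ [Hv [[i [Hi ->]] [HvT Huv]]]]]].
  - exists M. split; [lia|reflexivity].
  - rewrite Hlast. intros [i [Hi E]]. exact (Hdis i 0 Hi (eq_sym E)).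
  - destruct (path_in_ray_tails r1 r2 M 0 p H1 H2 He Hp Hlast v Hv) as [Hv1|[j [_ ->]]];
      [contradiction|].
    assert (Hcorner : is_path adj [r1 (S i); r1 i; r2 j]).
    { apply is_path_cons.
      - intros [E|[E|[]]]; [apply (proj1 H1) in E; lia|exact (Hdis (S i) j ltac:(lia) (eq_sym E))].
      - apply adj_sym, H1.
      - apply is_path_cons; [|exact Huv|apply singleton_path].
        intros [E|[]]. exact (Hdis i j Hi (eq_sym E)). }
    destruct (path_in_ray_tails r1 r2 (S i) j [r1 i; r2 j] H1 H2 He Hcorner eq_refl (r1 i)
      (or_intror (or_introl eq_refl))) as [[k [Hk E]]|[k [Hk E]]].
    + apply (proj1 H1) in E. lia.
    + exact (Hdis i k Hi E).
Qed.

Lemma end_equiv_tails r1 r2 : ray adj r1 -> ray adj r2 -> end_equiv adj r1 r2 ->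
  exists a b, forall i, r1 (a + i) = r2 (b + i).
Proof.
  intros H1 H2 He.
  assert (Hmeet : forall N, exists a b, N <= a /\ N <= b /\ r1 a = r2 b).
  { intros N. destruct (injective_eventually_avoids r1 r2 (proj1 H1) N) as [M HM].
    destruct (end_equiv_meets_cofinally r1 r2 H1 H2 He (max N M)) as [a [b [Ha E]]].
    exists a, b. split; [lia|split; [|exact E]].
    destruct (Nat.le_gt_cases N b) as [|Hb]; [assumption|].
    exfalso. exact (HM a b ltac:(lia) Hb E). }
  destruct (Hmeet 0) as [a0 [b0 [_ [_ E0]]]]. exists a0, b0. intros i.
  destruct (Hmeet (a0 + b0 + i)) as [a [b [Ha [Hb E]]]].
  apply (segments_agree r1 r2 a0 b0 (a - a0) (b - b0) H1 H2 E0); [|lia].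
  replace (a0 + (a - a0)) with a by lia. replace (b0 + (b - b0)) with b by lia. exact E.
Qed.

End Rays.

Section Levels.
Context {V : Type} (adj : V -> V -> Prop).
Hypothesis adj_sym : forall x y, adj x y -> adj y x.
Hypothesis adj_irrefl : forall x, ~ adj x x.
Hypothesis connected : connected_graph adj.
Hypothesis acyclic : ~ has_cycle adj.
Variable r : nat -> V.
Hypothesis ray_r : ray adj r.

Definition merges (rho : nat -> V) a b := forall i, rho (a + i) = r (b + i).

Definition toward_end x rho a b := ray adj rho /\ rho 0 = x /\ merges rho a b.

(* The Busemann function of the end of [r], normalised by [level (r b) (Z.of_nat b)]. *)
Definition level x (z : Z) :=
  exists rho a b, toward_end x rho a b /\ z = (Z.of_nat b - Z.of_nat a)%Z.

Definition parent x y := exists rho a b, toward_end x rho a b /\ rho 1 = y.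

Lemma toward_end_unique x r1 a1 b1 r2 a2 b2 :
  toward_end x r1 a1 b1 -> toward_end x r2 a2 b2 ->
  (forall i, r1 i = r2 i) /\ b1 + a2 = b2 + a1.
Proof.
  intros [H1 [E1 M1]] [H2 [E2 M2]].
  assert (Hagree : forall i, a1 + b2 + i = a2 + b1 + i /\ r1 i = r2 i).
  { intros i.
    destruct (segments_agree adj adj_sym acyclic r1 r2 0 0 (a1 + b2 + i) (a2 + b1 + i) H1 H2)
      as [Hlen Hpt]; [congruence| |split; [exact Hlen|apply Hpt; lia]].
    simpl. replace (a1 + b2 + i) with (a1 + (b2 + i)) by lia.
    replace (a2 + b1 + i) with (a2 + (b1 + i)) by lia.
    rewrite M1, M2. f_equal. lia. }
  split; [intros i; apply Hagree|]. destruct (Hagree 0). lia.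
Qed.

Lemma toward_end_shift x rho a b j :
  toward_end x rho a b -> toward_end (rho j) (fun i => rho (j + i)) a (b + j).
Proof.
  intros [[Hinj Hadj] [_ M]]. split; [split|split].
  - intros m n E. apply Hinj in E. lia.
  - intros n. rewrite Nat.add_succ_r. apply Hadj.
  - f_equal; lia.
  - intros i. replace (j + (a + i)) with (a + (j + i)) by lia. rewrite M. f_equal. lia.
Qed.

Lemma toward_end_cons x y rho a b :
  toward_end y rho a b -> adj x y -> (forall j, rho j <> x) ->
  toward_end x (fun i => match i with 0 => x | S i => rho i end) (S a) b.
Proof.
  intros [[Hinj Hadj] [E M]] Hxy Hx. split; [split|split; [reflexivity|exact M]].
  - intros [|m] [|n] Emn; [reflexivity|destruct (Hx n); symmetry; exact Emn|
      destruct (Hx m); exact Emn|f_equal; apply Hinj, Emn].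
  - intros [|n]; [rewrite E; exact Hxy|apply Hadj].
Qed.

Lemma toward_end_extend x y rho a b :
  toward_end y rho a b -> adj x y -> exists rho' a' b', toward_end x rho' a' b'.
Proof.
  intros Hy Hxy. destruct (classic (exists j, rho j = x)) as [[j <-]|Hx].
  - exists (fun i => rho (j + i)), a, (b + j). apply toward_end_shift with y, Hy.
  - eexists _, (S a), b. apply toward_end_cons with y; [exact Hy|exact Hxy|eauto].
Qed.

Lemma toward_end_exists x : exists rho a b, toward_end x rho a b.
Proof.
  destruct (connected x (r 0)) as [p [Hp [Hhd Hlast]]].
  destruct p as [|x' l]; [destruct Hp; congruence|]. injection Hhd as ->.
  rewrite last_cons in Hlast. destruct Hp as [_ [_ Hw]]. revert x Hw Hlast.
  induction l as [|y l IH]; intros x Hw Hlast.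
  - exists r, 0, 0. split; [exact ray_r|split; [symmetry; exact Hlast|intros i; reflexivity]].
  - destruct Hw as [Hxy Hw]. rewrite last_cons in Hlast.
    destruct (IH y Hw Hlast) as [rho [a [b Hy]]]. exact (toward_end_extend x y rho a b Hy Hxy).
Qed.

Lemma level_unique x z1 z2 : level x z1 -> level x z2 -> z1 = z2.
Proof.
  intros [r1 [a1 [b1 [H1 ->]]]] [r2 [a2 [b2 [H2 ->]]]].
  destruct (toward_end_unique x r1 a1 b1 r2 a2 b2 H1 H2) as [_ E]. lia.
Qed.

Lemma level_exists x : exists z, level x z.
Proof.
  destruct (toward_end_exists x) as [rho [a [b H]]].
  eexists. exists rho, a, b. split; [exact H|reflexivity].
Qed.

Lemma parent_unique x y1 y2 : parent x y1 -> parent x y2 -> y1 = y2.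
Proof.
  intros [r1 [a1 [b1 [H1 <-]]]] [r2 [a2 [b2 [H2 <-]]]].
  apply (toward_end_unique x r1 a1 b1 r2 a2 b2 H1 H2).
Qed.

Lemma parent_level x y z : parent x y -> level x z -> level y (z + 1).
Proof.
  intros [rho [a [b [H <-]]]] Hz.
  assert (z = (Z.of_nat b - Z.of_nat a)%Z) as ->.
  { apply (level_unique x); [exact Hz|exists rho, a, b; split; [exact H|reflexivity]]. }
  exists (fun i => rho (1 + i)), a, (b + 1). split; [apply toward_end_shift with x, H|lia].
Qed.

Lemma adj_parent x y : adj x y -> parent x y \/ parent y x.
Proof.
  intros Hxy. destruct (toward_end_exists x) as [rho [a [b H]]].
  destruct (classic (exists j, rho j = y)) as [[j Hj]|Hy].
  - destruct H as [Hrho [E M]]. destruct j as [|[|j]].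
    + exfalso. rewrite E in Hj. subst. exact (adj_irrefl _ Hxy).
    + left. exists rho, a, b. split; [split; [exact Hrho|split; assumption]|exact Hj].
    + exfalso.
      assert (Hnil : map rho (seq 2 (S j)) = []).
      { apply (acyclic_closing_edge adj acyclic (rho 0) (rho 1));
          [exact (segment_path adj rho 0 (S (S j)) Hrho)|].
        rewrite segment_end. simpl Nat.add. rewrite Hj, E. apply adj_sym, Hxy. }
      discriminate Hnil.
  - right. exists (fun i => match i with 0 => y | S i => rho i end), (S a), b. split.
    + apply toward_end_cons with x; [exact H|apply adj_sym, Hxy|eauto].
    + exact (proj1 (proj2 H)).
Qed.

Lemma parent_of_descent R n :
  ray adj R -> parent (R (S n)) (R n) -> parent (R (S (S n))) (R (S n)).
Proof.
  intros HR Hp. destruct (adj_parent (R (S n)) (R (S (S n)))) as [Hp'|Hp'];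
    [apply HR| |exact Hp'].
  exfalso. apply (parent_unique _ _ _ Hp), (proj1 HR) in Hp'. lia.
Qed.

Lemma merges_of_ascent R :
  ray adj R -> (forall n, parent (R n) (R (S n))) -> exists a b, merges R a b.
Proof.
  intros HR Hup. destruct (toward_end_exists (R 0)) as [rho [a [b H]]].
  assert (Hagree : forall n, R n = rho n).
  { induction n as [|n IH]; [symmetry; apply H|].
    apply (parent_unique (R n)); [apply Hup|]. rewrite IH.
    exists (fun i => rho (n + i)), a, (b + n).
    split; [apply toward_end_shift with (R 0), H|f_equal; lia]. }
  exists a, b. intros i. rewrite Hagree. apply H.
Qed.

Definition descends (R : nat -> V) n z := forall t, level (R (n + t)) (z - Z.of_nat t).

Lemma descending_levels R : ray adj R -> (forall a b, ~ merges R a b) -> exists n z, descends R n z.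
Proof.
  intros HR Hnm.
  assert (Hdown : exists n, parent (R (S n)) (R n)).
  { apply NNPP; intros Hnone. destruct (merges_of_ascent R HR) as [a [b M]]; [|exact (Hnm a b M)].
    intros n. destruct (adj_parent (R n) (R (S n)) (proj2 HR n)) as [|Hp]; [assumption|].
    exfalso. eauto. }
  destruct Hdown as [n Hn]. destruct (level_exists (R n)) as [z Hz]. exists n, z. unfold descends.
  assert (Hpar : forall t, parent (R (S (n + t))) (R (n + t))).
  { induction t as [|t IH]; [rewrite Nat.add_0_r; exact Hn|].
    rewrite Nat.add_succ_r. apply parent_of_descent; assumption. }
  induction t as [|t IH].
  { rewrite Nat.add_0_r. replace (z - Z.of_nat 0)%Z with z by lia. exact Hz. }
  destruct (level_exists (R (n + S t))) as [w Hw]. rewrite Nat.add_succ_r in Hw |- *.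
  pose proof (level_unique _ _ _ (parent_level _ _ _ (Hpar t) Hw) IH).
  replace (z - Z.of_nat (S t))%Z with w by lia. exact Hw.
Qed.

(* Meaningful only for [L <= z], as [Z.to_nat] truncates. *)
Definition vertex_at_level (R : nat -> V) n z L := R (n + Z.to_nat (z - L)).

Lemma descends_level R n z L :
  descends R n z -> (L <= z)%Z -> level (vertex_at_level R n z L) L.
Proof.
  intros HR HL. pose proof (HR (Z.to_nat (z - L))) as H.
  rewrite Z2Nat.id in H by lia. replace (z - (z - L))%Z with L in H by lia. exact H.
Qed.

Lemma low_vertices_distinct R1 R2 n1 z1 n2 z2 : ray adj R1 -> ~ end_equiv adj R1 R2 ->
  exists L0, forall L, (L <= L0)%Z -> vertex_at_level R1 n1 z1 L <> vertex_at_level R2 n2 z2 L.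
Proof.
  intros H1 Hne. destruct (not_end_equiv_eventually_disjoint adj R1 R2 H1 Hne) as [M HM].
  exists (z1 - Z.of_nat M)%Z. intros L HL. apply HM. lia.
Qed.

Lemma merging_rays_equiv R1 R2 a1 b1 a2 b2 :
  ray adj R1 -> merges R1 a1 b1 -> merges R2 a2 b2 -> end_equiv adj R1 R2.
Proof.
  intros H1 M1 M2. apply end_equiv_of_meets_cofinally; [exact H1|].
  intros N. exists (a1 + (b2 + N)), (a2 + (b1 + N)). split; [lia|].
  rewrite M1, M2. f_equal. lia.
Qed.

Lemma rays_away_from_end : infinitely_many_ends adj ->
  exists R : nat -> nat -> V, (forall j, ray adj (R j)) /\
    (forall j j', j <> j' -> ~ end_equiv adj (R j) (R j')) /\ (forall j a b, ~ merges (R j) a b).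
Proof.
  intros [R [HR Hineq]].
  destruct (classic (exists j0 a b, merges (R j0) a b)) as [[j0 [a0 [b0 M0]]]|Hnone].
  - exists (fun j => R (S (j0 + j))). split; [intros j; apply HR|split].
    + intros j j' Hjj'. apply Hineq. lia.
    + intros j a b M. apply (Hineq j0 (S (j0 + j))); [lia|].
      exact (merging_rays_equiv _ _ a0 b0 a b (HR j0) M0 M).
  - exists R. split; [exact HR|split; [exact Hineq|]]. intros j a b M. eauto.
Qed.

Lemma arbitrarily_large_level : infinitely_many_ends adj ->
  forall k, exists L l, NoDup l /\ k < length l /\ forall x, In x l -> level x L.
Proof.
  intros Hends k. destruct (rays_away_from_end Hends) as [R [HR [Hineq Hnm]]].
  destruct (choice (fun j nz => descends (R j) (fst nz) (snd nz))) as [nz Hnz].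
  { intros j. destruct (descending_levels (R j) (HR j) (Hnm j)) as [n [z H]].
    exists (n, z). exact H. }
  set (v j L := vertex_at_level (R j) (fst (nz j)) (snd (nz j)) L).
  assert (Hpair : forall j j', exists L0, forall L, (L <= L0)%Z ->
      (L <= snd (nz j))%Z /\ (j <> j' -> v j L <> v j' L)).
  { intros j j'. destruct (Nat.eq_dec j j') as [<-|Hjj'].
    - exists (snd (nz j)). intros L HL. split; [exact HL|contradiction].
    - destruct (low_vertices_distinct (R j) (R j') (fst (nz j)) (snd (nz j)) (fst (nz j'))
        (snd (nz j')) (HR j) (Hineq j j' Hjj')) as [L1 HL1].
      exists (Z.min (snd (nz j)) L1). intros L HL. split; [lia|intros _; apply HL1; lia]. }
  destruct (eventually_below_all (fun j L => forall j', j' <= k ->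
      (L <= snd (nz j))%Z /\ (j <> j' -> v j L <> v j' L)) k) as [L HL].
  { intros j _. destruct (eventually_below_all (fun j' L =>
      (L <= snd (nz j))%Z /\ (j <> j' -> v j L <> v j' L)) k) as [L0 HL0];
      [intros j' _; apply Hpair|].
    exists L0. intros L HL j' Hj'. exact (HL0 j' Hj' L HL). }
  exists L, (map (fun j => v j L) (seq 0 (S k))). split; [|split].
  - apply NoDup_map_NoDup_ForallPairs; [|apply seq_NoDup].
    intros j j' Hj Hj' E. apply in_seq in Hj, Hj'.
    destruct (Nat.eq_dec j j') as [|Hjj']; [assumption|].
    exfalso. exact (proj2 (HL j ltac:(lia) L (Z.le_refl L) j' ltac:(lia)) Hjj' E).
  - rewrite length_map, length_seq. lia.
  - intros x Hx. apply in_map_iff in Hx as [j [<- Hj]]. apply in_seq in Hj.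
    apply descends_level; [apply Hnz|exact (proj1 (HL j ltac:(lia) L (Z.le_refl L) 0 ltac:(lia)))].
Qed.

End Levels.

Section Action.
Context {G : Type} (mul : G -> G -> G) (one : G) (inv : G -> G).
Context {V : Type} (adj : V -> V -> Prop) (act : G -> V -> V).
Hypothesis group : is_group mul one inv.
Hypothesis action : is_graph_action mul one adj act.

Lemma act_inv_l g x : act (inv g) (act g x) = x.
Proof.
  destruct action as [Hone [Hmul _]]. destruct group as [_ [_ [_ [Hinv _]]]].
  rewrite <- Hmul, Hinv. apply Hone.
Qed.

Lemma ray_act g rho : ray adj rho -> ray adj (fun i => act g (rho i)).
Proof.
  intros [Hinj Hadj]. split.
  - intros m n E. apply Hinj. rewrite <- (act_inv_l g (rho m)), E. apply act_inv_l.
  - intros n. apply (proj2 (proj2 action)), Hadj.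
Qed.

Hypothesis adj_sym : forall x y, adj x y -> adj y x.
Hypothesis acyclic : ~ has_cycle adj.
Hypothesis connected : connected_graph adj.
Variable r : nat -> V.
Hypothesis ray_r : ray adj r.
Hypothesis stab : stabilizes_end adj act r.

Lemma end_translation g : exists c d, forall i, act g (r (c + i)) = r (d + i).
Proof.
  assert (Hrr : end_equiv adj r r).
  { apply end_equiv_of_meets_cofinally; [exact ray_r|].
    intros M. exists M, M. split; [lia|reflexivity]. }
  apply (end_equiv_tails adj adj_sym acyclic connected (fun i => act g (r i)) r);
    [apply ray_act, ray_r|exact ray_r|exact (stab g r ray_r Hrr)].
Qed.

Lemma toward_end_act g c d x rho a b :
  (forall i, act g (r (c + i)) = r (d + i)) -> toward_end adj r x rho a b ->
  toward_end adj r (act g x) (fun i => act g (rho i)) (a + c) (d + b).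
Proof.
  intros Hcd [Hrho [E M]]. split; [apply ray_act, Hrho|split; [rewrite E; reflexivity|]].
  intros i. replace (a + c + i) with (a + (c + i)) by lia. rewrite M.
  replace (b + (c + i)) with (c + (b + i)) by lia. rewrite Hcd. f_equal. lia.
Qed.

Hypothesis free : free_action one act.

Lemma level_act_fixed g x z : level adj r x z -> level adj r (act g x) z -> g = one.
Proof.
  intros [rho [a [b [H ->]]]] Hgx. destruct (end_translation g) as [c [d Hcd]].
  assert (Hshift : level adj r (act g x) (Z.of_nat (d + b) - Z.of_nat (a + c))).
  { exists (fun i => act g (rho i)), (a + c), (d + b).
    split; [apply toward_end_act; assumption|reflexivity]. }
  pose proof (level_unique adj adj_sym acyclic r _ _ _ Hshift Hgx).
  apply (free g (r c)). specialize (Hcd 0). rewrite !Nat.add_0_r in Hcd.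
  replace d with c in Hcd by lia. exact Hcd.
Qed.

Lemma level_length_le s : (forall v, exists u g, In u s /\ act g u = v) ->
  forall L l, NoDup l -> (forall x, In x l -> level adj r x L) -> length l <= length s.
Proof.
  intros Hs L l Hnd Hl.
  destruct (choice (fun v u => In u s /\ exists g, act g u = v)) as [rep Hrep].
  { intros v. destruct (Hs v) as [u [g [Hu Hg]]]. eauto. }
  rewrite <- (length_map rep). apply NoDup_incl_length.
  - apply NoDup_map_NoDup_ForallPairs; [|exact Hnd]. intros x y Hx Hy E.
    destruct (Hrep x) as [_ [g Hg]], (Hrep y) as [_ [h Hh]]. rewrite E in Hg.
    assert (Hxy : act (mul h (inv g)) x = y).
    { rewrite (proj1 (proj2 action)), <- Hg, act_inv_l. exact Hh. }
    assert (Hone : mul h (inv g) = one).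
    { apply (level_act_fixed _ x L); [apply Hl, Hx|rewrite Hxy; apply Hl, Hy]. }
    rewrite <- Hxy, Hone. symmetry. apply (proj1 action).
  - intros u Hu. apply in_map_iff in Hu as [v [<- _]]. apply Hrep.
Qed.

End Action.

Theorem lemma4p2 (G : Type) (mul : G -> G -> G) (one : G) (inv : G -> G)
  (V : Type) (adj : V -> V -> Prop) (act : G -> V -> V) :
  is_group mul one inv ->
  is_tree adj ->
  is_graph_action mul one adj act ->
  quasi_transitive act ->
  infinitely_many_ends adj ->
  stabilizes_some_end adj act ->
  ~ free_action one act.
Proof.
  intros Hgroup [Hsym [Hirr [Hcon Hnc]]] Hact [s Hs] Hends [r [Hr Hstab]] Hfree.
  destruct (arbitrarily_large_level adj Hsym Hirr Hcon Hnc r Hr Hends (length s))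
    as [L [l [Hnd [Hlen Hl]]]].
  pose proof (level_length_le mul one inv adj act Hgroup Hact Hsym Hnc Hcon r Hr Hstab Hfree
    s Hs L l Hnd Hl).
  lia.
Qed.
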